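(* Let $\alpha$ be a unit-speed curve in $\mathbb{R}^3$ with arc length $s$, nonzero curvature $\kappa$ and torsion $\tau$. Let $\alpha_T$ be its tangent indicatrix, and let $\beta$ be a Bertrand-direction curve of $\alpha_T$ with constant angle $\theta$ (so $X=\cos\theta\,T_T+\sin\theta\,B_T$). Then, at corresponding parameter values, $$\frac{-\sin\theta+(\tau_\beta/\kappa_\beta)\cos\theta}{\cos\theta+(\tau_\beta/\kappa_\beta)\sin\theta}=\frac{\kappa^2}{(\kappa^2+\tau^2)^{3/2}}\Big(\frac{\tau}{\kappa}\Big)',$$ where $'=d/ds$.
   Context: Let $\alpha:I\subset\mathbb{R}\to\mathbb{R}^3$ be a unit-speed curve with arc length $s$, curvature $\kappa>0$, torsion $\tau$ and Frenet frame $\{T,N,B\}$. Put $f=\tau/\kappa$ and $\sigma=\frac{\kappa^2}{(\kappa^2+\tau^2)^{3/2}}(\tau/\kappa)'$. The tangent indicatrix of $\alpha$ is the curve $\alpha_T=T$ on the unit sphere. Its arc length is $s_T=\int\kappa\,ds$, so parameters $s$ and $s_T(s)$ correspond. Its Frenet apparatus is $\{T_T,N_T,B_T,\kappa_T,\tau_T\}$, with $\frac{dT_T}{ds_T}=\kappa_TN_T$, $\frac{dN_T}{ds_T}=-\kappa_TT_T+\tau_TB_T$ and $\frac{dB_T}{ds_T}=-\tau_TN_T$. It is known that $\kappa_T=\sqrt{1+f^2}$ and $\tau_T=\sigma\sqrt{1+f^2}$. Let $x,y,z$ be real functions of $s_T$ with $x^2+y^2+z^2=1$, and set $X=xT_T+yN_T+zB_T$.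 An integral curve $\beta$ of $X$, meaning $d\beta/ds_T=X$, is an $X$-direction curve of $\alpha_T$. It is regarded as a unit-speed Frenet curve with frame $\{T_\beta=X,N_\beta,B_\beta\}$, curvature $\kappa_\beta>0$ and torsion $\tau_\beta$. $\beta$ is a Bertrand-direction curve of $\alpha_T$ if $N_\beta=N_T$; then $X=\cos\theta\,T_T+\sin\theta\,B_T$ for a constant $\theta$. *)

From Stdlib Require Import Reals.
From Coquelicot Require Import Coquelicot.
Open Scope R_scope.

Record vec3 : Type := V3 { vx : R ; vy : R ; vz : R }.

Definition vadd (a b : vec3) : vec3 := V3 (vx a + vx b) (vy a + vy b) (vz a + vz b).
Definition vscal (k : R) (a : vec3) : vec3 := V3 (k * vx a) (k * vy a) (k * vz a).
Definition dot (a b : vec3) : R := vx a * vx b + vy a * vy b + vz a * vz b.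
Definition cross (a b : vec3) : vec3 :=
  V3 (vy a * vz b - vz a * vy b)
     (vz a * vx b - vx a * vz b)
     (vx a * vy b - vy a * vx b).

Definition vderive (c : R -> vec3) (u : R) (v : vec3) : Prop :=
  is_derive (fun t => vx (c t)) u (vx v) /\
  is_derive (fun t => vy (c t)) u (vy v) /\
  is_derive (fun t => vz (c t)) u (vz v).

Definition pos_orthonormal (T N B : vec3) : Prop :=
  dot T T = 1 /\ dot N N = 1 /\ dot B B = 1 /\
  dot T N = 0 /\ dot T B = 0 /\ dot N B = 0 /\
  B = cross T N.

Definition frenet_apparatus (D : R -> Prop) (c T N B : R -> vec3) (k t : R -> R) : Prop :=
  forall u, D u ->
    vderive c u (T u) /\
    vderive T u (vscal (k u) (N u)) /\
    vderive N u (vadd (vscal (- k u) (T u)) (vscal (t u) (B u))) /\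
    vderive B u (vscal (- t u) (N u)) /\
    pos_orthonormal (T u) (N u) (B u) /\
    0 < k u.

Definition in_interval (a b : Rbar) (s : R) : Prop := Rbar_lt a (Finite s) /\ Rbar_lt (Finite s) b.

Definition image_interval (a b : Rbar) (phi : R -> R) (u : R) : Prop :=
  exists s : R, in_interval a b s /\ u = phi s.

(** The tangent indicatrix [T] of [alpha], reparametrised by [s_T], has tangent
    [T_T = N] and normal [N_T] proportional to [N' = -kappa T + tau B]; hence
    [B_T] is proportional to the Darboux direction [tau T + kappa B] and
    [kappa kappa_T = sqrt (kappa^2 + tau^2)].  Differentiating the identity
    [<N_T, f T + B> = 0], where [(f T + B)' = f' T], gives
    [tau_T (kappa^2 + tau^2) = kappa f'], i.e. [tau_T / kappa_T = sigma].
    For the Bertrand-direction curve, [T_beta] and [B_beta] are [T_T] and [B_T]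
    rotated by [theta] about [N_T], so [(kappa_beta, tau_beta)] is
    [(kappa_T, tau_T)] rotated by [theta]; undoing the rotation expresses
    [tau_T / kappa_T] through [tau_beta / kappa_beta] as on the left-hand side. *)

From Stdlib Require Import Reals Lra.
From Coquelicot Require Import Coquelicot.
Open Scope R_scope.

Lemma vec3_ext (u v : vec3) : vx u = vx v -> vy u = vy v -> vz u = vz v -> u = v.
Proof. now destruct u, v; simpl; intros -> -> ->. Qed.

Lemma dot_vadd_l u v w : dot (vadd u v) w = dot u w + dot v w.
Proof. destruct u, v, w; unfold dot, vadd; simpl; ring. Qed.

Lemma dot_vadd_r u v w : dot w (vadd u v) = dot w u + dot w v.
Proof. destruct u, v, w; unfold dot, vadd; simpl; ring. Qed.

Lemma dot_vscal_l k u w : dot (vscal k u) w = k * dot u w.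
Proof. destruct u, w; unfold dot, vscal; simpl; ring. Qed.

Lemma dot_vscal_r k u w : dot w (vscal k u) = k * dot w u.
Proof. destruct u, w; unfold dot, vscal; simpl; ring. Qed.

Lemma dot_comm u v : dot u v = dot v u.
Proof. destruct u, v; unfold dot; simpl; ring. Qed.

Tactic Notation "expand_dot" :=
  repeat rewrite ?dot_vadd_l, ?dot_vadd_r, ?dot_vscal_l, ?dot_vscal_r.
Tactic Notation "expand_dot" "in" hyp(H) :=
  repeat rewrite ?dot_vadd_l, ?dot_vadd_r, ?dot_vscal_l, ?dot_vscal_r in H.

Lemma cross_vadd_l u v w : cross (vadd u v) w = vadd (cross u w) (cross v w).
Proof. destruct u, v, w; unfold cross, vadd; simpl; f_equal; ring. Qed.

Lemma cross_vadd_r u v w : cross w (vadd u v) = vadd (cross w u) (cross w v).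
Proof. destruct u, v, w; unfold cross, vadd; simpl; f_equal; ring. Qed.

Lemma cross_vscal_l k u w : cross (vscal k u) w = vscal k (cross u w).
Proof. destruct u, w; unfold cross, vscal; simpl; f_equal; ring. Qed.

Lemma cross_vscal_r k u w : cross w (vscal k u) = vscal k (cross w u).
Proof. destruct u, w; unfold cross, vscal; simpl; f_equal; ring. Qed.

Lemma cross_anticomm u v : cross u v = vscal (-1) (cross v u).
Proof. destruct u, v; unfold cross, vscal; simpl; f_equal; ring. Qed.

Lemma vector_triple_product u v w :
  cross u (cross v w) = vadd (vscal (dot u w) v) (vscal (- dot u v) w).
Proof. destruct u, v, w; unfold cross, vscal, vadd, dot; simpl; f_equal; ring. Qed.

Lemma frame_cross_NB {T N B : vec3} : pos_orthonormal T N B -> cross N B = T.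
Proof.
  intros (_ & HNN & _ & HTN & _ & _ & ->).
  rewrite vector_triple_product, (dot_comm N T), HNN, HTN.
  destruct T, N; unfold vscal, vadd; simpl; f_equal; ring.
Qed.

Lemma frame_cross_BN {T N B : vec3} : pos_orthonormal T N B -> cross B N = vscal (-1) T.
Proof. intros HF. now rewrite cross_anticomm, (frame_cross_NB HF). Qed.

Lemma frame_cross_NT {T N B : vec3} : pos_orthonormal T N B -> cross N T = vscal (-1) B.
Proof. intros (_ & _ & _ & _ & _ & _ & ->). apply cross_anticomm. Qed.

Lemma is_derive_Rplus (f g : R -> R) x df dg :
  is_derive f x df -> is_derive g x dg -> is_derive (fun t => f t + g t) x (df + dg).
Proof. exact (@is_derive_plus _ R_NormedModule f g x df dg). Qed.

Lemma is_derive_Rmult (f g : R -> R) x df dg :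
  is_derive f x df -> is_derive g x dg ->
  is_derive (fun t => f t * g t) x (df * g x + f x * dg).
Proof. intros Hf Hg. exact (is_derive_mult f g x df dg Hf Hg Rmult_comm). Qed.

Lemma in_interval_locally {a b : Rbar} {s : R} : in_interval a b s -> locally s (in_interval a b).
Proof. exact (open_and _ _ (open_Rbar_gt a) (open_Rbar_lt b) s). Qed.

Lemma is_derive_Runique (f : R -> R) x l1 l2 :
  is_derive f x l1 -> is_derive f x l2 -> l1 = l2.
Proof. intros H1 H2. now rewrite <- (is_derive_unique _ _ _ H1), <- (is_derive_unique _ _ _ H2). Qed.

Lemma is_derive_locally_zero {f : R -> R} {x l : R} :
  locally x (fun t => f t = 0) -> is_derive f x l -> l = 0.
Proof.
  intros Hz Hf. apply (is_derive_ext_loc _ (fun _ => 0)) in Hf; [|exact Hz].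
  exact (is_derive_Runique _ _ _ _ Hf (is_derive_const 0 x)).
Qed.

Lemma vderive_unique c u v w : vderive c u v -> vderive c u w -> v = w.
Proof.
  intros (Hx & Hy & Hz) (Hx' & Hy' & Hz').
  apply vec3_ext; eapply is_derive_Runique; eassumption.
Qed.

Lemma vderive_ext_loc (c d : R -> vec3) u v :
  locally u (fun t => c t = d t) -> vderive c u v -> vderive d u v.
Proof.
  intros Hcd (Hx & Hy & Hz).
  split; [|split]; eapply is_derive_ext_loc; try eassumption;
    eapply filter_imp; try exact Hcd; intros t ->; reflexivity.
Qed.

Lemma vderive_comp (c : R -> vec3) (g : R -> R) u v k :
  vderive c (g u) v -> is_derive g u k -> vderive (fun t => c (g t)) u (vscal k v).
Proof.
  intros (Hx & Hy & Hz) Hg.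
  split; [|split]; simpl;
    [ apply (is_derive_comp (fun t => vx (c t)))
    | apply (is_derive_comp (fun t => vy (c t)))
    | apply (is_derive_comp (fun t => vz (c t))) ]; assumption.
Qed.

Lemma vderive_vadd (c d : R -> vec3) u v w :
  vderive c u v -> vderive d u w -> vderive (fun t => vadd (c t) (d t)) u (vadd v w).
Proof.
  intros (Hx & Hy & Hz) (Hx' & Hy' & Hz').
  split; [|split]; simpl; apply is_derive_Rplus; assumption.
Qed.

Lemma vderive_vscal (f : R -> R) (c : R -> vec3) u df v :
  is_derive f u df -> vderive c u v ->
  vderive (fun t => vscal (f t) (c t)) u (vadd (vscal df (c u)) (vscal (f u) v)).
Proof.
  intros Hf (Hx & Hy & Hz).
  split; [|split]; simpl; apply is_derive_Rmult; assumption.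
Qed.

Lemma vderive_const_vscal (k : R) (c : R -> vec3) u v :
  vderive c u v -> vderive (fun t => vscal k (c t)) u (vscal k v).
Proof.
  intros Hc. eapply vderive_vscal in Hc; [|apply (is_derive_const k)].
  replace (vscal k v) with (vadd (vscal zero (c u)) (vscal k v)); [exact Hc|].
  destruct v, (c u); unfold vscal, vadd, zero; simpl; f_equal; ring.
Qed.

Lemma is_derive_dot (c d : R -> vec3) u v w :
  vderive c u v -> vderive d u w ->
  is_derive (fun t => dot (c t) (d t)) u (dot v (d u) + dot (c u) w).
Proof.
  intros (Hx & Hy & Hz) (Hx' & Hy' & Hz').
  replace (dot v (d u) + dot (c u) w) with
    ((vx v * vx (d u) + vx (c u) * vx w) + (vy v * vy (d u) + vy (c u) * vy w)
     + (vz v * vz (d u) + vz (c u) * vz w)) by (unfold dot; ring).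
  unfold dot; apply is_derive_Rplus; [apply is_derive_Rplus|]; apply is_derive_Rmult; assumption.
Qed.

Lemma vderive_reparam (c d : R -> vec3) (phi : R -> R) u v k w :
  locally u (fun t => c (phi t) = d t) ->
  vderive c (phi u) v -> is_derive phi u k -> vderive d u w -> vscal k v = w.
Proof.
  intros Hcd Hc Hphi Hd.
  apply (vderive_unique d u); [|exact Hd].
  exact (vderive_ext_loc _ _ _ _ Hcd (vderive_comp _ _ _ _ _ Hc Hphi)).
Qed.

Lemma vscal_inj k u v : k <> 0 -> vscal k u = vscal k v -> u = v.
Proof.
  intros Hk E. destruct u, v; unfold vscal in E; injection E; intros.
  f_equal; apply (Rmult_eq_reg_l k); assumption.
Qed.

Lemma vscal_vscal k l u : vscal k (vscal l u) = vscal (k * l) u.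
Proof. destruct u; unfold vscal; simpl; f_equal; ring. Qed.

Lemma Rpower_sqr_three_halves w : 0 < w -> Rpower (w ^ 2) (3 / 2) = w ^ 3.
Proof.
  intros Hw.
  rewrite <- (Rpower_pow 2 w Hw), Rpower_mult, <- (Rpower_pow 3 w Hw).
  f_equal; simpl; field.
Qed.

Lemma rotated_ratio {theta k t kb tb : R} :
  kb = cos theta * k - sin theta * t -> tb = sin theta * k + cos theta * t ->
  kb <> 0 -> k <> 0 ->
  (- sin theta + tb / kb * cos theta) / (cos theta + tb / kb * sin theta) = t / k.
Proof.
  intros Ekb Etb Hkb Hk.
  assert (Hsc := sin2_cos2 theta); unfold Rsqr in Hsc.
  assert (Et : - sin theta * kb + tb * cos theta = t).
  { rewrite Ekb, Etb; transitivity (t * (sin theta * sin theta + cos theta * cos theta));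
      [ring | rewrite Hsc; ring]. }
  assert (Ek : cos theta * kb + tb * sin theta = k).
  { rewrite Ekb, Etb; transitivity (k * (sin theta * sin theta + cos theta * cos theta));
      [ring | rewrite Hsc; ring]. }
  replace (- sin theta + tb / kb * cos theta) with ((- sin theta * kb + tb * cos theta) / kb)
    by (field; exact Hkb).
  replace (cos theta + tb / kb * sin theta) with ((cos theta * kb + tb * sin theta) / kb)
    by (field; exact Hkb).
  rewrite Et, Ek; field; split; assumption.
Qed.

Lemma bertrand_direction_curvatures {D : R -> Prop} {c TT NT BT : R -> vec3} {k t : R -> R}
  {theta : R} {beta Bb : R -> vec3} {kb tb : R -> R} {u : R} :
  frenet_apparatus D c TT NT BT k t ->
  frenet_apparatus D beta
    (fun v => vadd (vscal (cos theta) (TT v)) (vscal (sin theta) (BT v))) NT Bb kb tb ->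
  D u ->
  kb u = cos theta * k u - sin theta * t u /\ tb u = sin theta * k u + cos theta * t u.
Proof.
  intros Hc Hbeta Hu.
  destruct (Hc u Hu) as (_ & DT & DN & DB & HF & _).
  destruct (Hbeta u Hu) as (_ & DX & DNb & _ & (_ & _ & HBbBb & _ & HXBb & _ & EBb) & _).
  pose proof HF as (HTT & HNN & HBB & _ & HTB & _ & EB).
  cbv beta in *.
  split.
  - assert (EX := vderive_unique _ _ _ _ DX
      (vderive_vadd _ _ _ _ _ (vderive_const_vscal _ _ _ _ DT) (vderive_const_vscal _ _ _ _ DB))).
    apply (f_equal (fun v => dot v (NT u))) in EX.
    expand_dot in EX; rewrite HNN in EX; lra.
  - assert (EBb' : Bb u = vadd (vscal (cos theta) (BT u)) (vscal (- sin theta) (TT u))).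
    { rewrite EBb, cross_vadd_l, !cross_vscal_l, <- EB, (frame_cross_BN HF), vscal_vscal.
      now replace (sin theta * -1) with (- sin theta) by ring. }
    assert (EN := vderive_unique _ _ _ _ DNb DN).
    apply (f_equal (fun v => dot v (Bb u))) in EN.
    rewrite !dot_vadd_l, !dot_vscal_l, HXBb, HBbBb, EBb' in EN.
    expand_dot in EN; rewrite (dot_comm (BT u) (TT u)), HTT, HBB, HTB in EN; lra.
Qed.

Lemma image_interval_image {a b : Rbar} (phi : R -> R) {s : R} :
  in_interval a b s -> image_interval a b phi (phi s).
Proof. intros Hs; now exists s. Qed.

Section TangentIndicatrix.

Set Implicit Arguments.

Variables (a b : Rbar) (alpha T N B : R -> vec3) (kappa tau : R -> R).
Hypothesis Halpha : frenet_apparatus (in_interval a b) alpha T N B kappa tau.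
Variables (sT : R -> R) (alphaT TT NT BT : R -> vec3) (kT tT : R -> R).
Hypothesis HsT : forall s, in_interval a b s -> is_derive sT s (kappa s).
Hypothesis HalphaT_def : forall s, in_interval a b s -> alphaT (sT s) = T s.
Hypothesis HalphaT : frenet_apparatus (image_interval a b sT) alphaT TT NT BT kT tT.

Lemma kappa_kT_pos s : in_interval a b s -> 0 < kappa s * kT (sT s).
Proof.
  intros Hs.
  destruct (Halpha Hs) as (_ & _ & _ & _ & _ & Hk).
  destruct (HalphaT (image_interval_image sT Hs)) as (_ & _ & _ & _ & _ & HkT).
  now apply Rmult_lt_0_compat.
Qed.

Lemma indicatrix_tangent s : in_interval a b s -> TT (sT s) = N s.
Proof.
  intros Hs.
  destruct (Halpha Hs) as (_ & DT & _ & _ & _ & Hk).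
  destruct (HalphaT (image_interval_image sT Hs)) as (Dc & _).
  apply (vscal_inj (kappa s)); [lra|].
  apply (vderive_reparam alphaT T sT s); [| exact Dc | exact (HsT Hs) | exact DT].
  eapply filter_imp; [|exact (in_interval_locally Hs)]; exact HalphaT_def.
Qed.

Lemma indicatrix_normal s : in_interval a b s ->
  vscal (kappa s * kT (sT s)) (NT (sT s))
  = vadd (vscal (- kappa s) (T s)) (vscal (tau s) (B s)).
Proof.
  intros Hs.
  destruct (Halpha Hs) as (_ & _ & DN & _).
  destruct (HalphaT (image_interval_image sT Hs)) as (_ & DTT & _).
  rewrite <- vscal_vscal.
  apply (vderive_reparam TT N sT s); [| exact DTT | exact (HsT Hs) | exact DN].
  eapply filter_imp; [|exact (in_interval_locally Hs)]; exact indicatrix_tangent.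
Qed.

Lemma indicatrix_curvature s : in_interval a b s ->
  (kappa s * kT (sT s)) ^ 2 = kappa s ^ 2 + tau s ^ 2.
Proof.
  intros Hs.
  destruct (Halpha Hs) as (_ & _ & _ & _ & (HTT & _ & HBB & _ & HTB & _) & _).
  destruct (HalphaT (image_interval_image sT Hs)) as (_ & _ & _ & _ & (_ & HNN & _) & _).
  assert (E := f_equal (fun v => dot v v) (indicatrix_normal Hs)); cbv beta in E.
  expand_dot in E; rewrite HNN, (dot_comm (B s)), HTT, HBB, HTB in E.
  replace ((kappa s * kT (sT s)) ^ 2) with (kappa s * kT (sT s) * (kappa s * kT (sT s) * 1))
    by ring.
  rewrite E; ring.
Qed.

Lemma indicatrix_binormal s : in_interval a b s ->
  vscal (kappa s * kT (sT s)) (BT (sT s))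
  = vadd (vscal (tau s) (T s)) (vscal (kappa s) (B s)).
Proof.
  intros Hs.
  destruct (Halpha Hs) as (_ & _ & _ & _ & HF & _).
  destruct (HalphaT (image_interval_image sT Hs)) as (_ & _ & _ & _ & (_ & _ & _ & _ & _ & _ & EBT) & _).
  rewrite EBT, <- cross_vscal_r, indicatrix_normal, indicatrix_tangent by exact Hs.
  rewrite cross_vadd_r, !cross_vscal_r, (frame_cross_NT HF), (frame_cross_NB HF), vscal_vscal.
  destruct (T s), (B s); unfold vadd, vscal; simpl; f_equal; ring.
Qed.

Variable df : R -> R.
Hypothesis Hdf : forall s, in_interval a b s -> is_derive (fun x => tau x / kappa x) s (df s).

(** [(tau / kappa) T + B] is the Darboux vector [tau T + kappa B] divided by [kappa]. *)
Lemma darboux_direction_derive s : in_interval a b s ->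
  vderive (fun x => vadd (vscal (tau x / kappa x) (T x)) (B x)) s (vscal (df s) (T s)).
Proof.
  intros Hs.
  destruct (Halpha Hs) as (_ & DT & _ & DB & _ & Hk).
  assert (D := vderive_vadd _ _ _ _ _ (vderive_vscal _ _ _ _ _ (Hdf Hs) DT) DB).
  match type of D with vderive _ _ ?v => replace (vscal (df s) (T s)) with v end; [exact D|].
  destruct (T s), (N s); unfold vadd, vscal; simpl; f_equal; field; lra.
Qed.

Lemma indicatrix_normal_orthogonal_darboux s : in_interval a b s ->
  dot (NT (sT s)) (vadd (vscal (tau s / kappa s) (T s)) (B s)) = 0.
Proof.
  intros Hs.
  destruct (Halpha Hs) as (_ & _ & _ & _ & (HTT & _ & HBB & _ & HTB & _) & Hk).
  apply (Rmult_eq_reg_l (kappa s * kT (sT s))); [|apply Rgt_not_eq, kappa_kT_pos, Hs].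
  rewrite Rmult_0_r, <- dot_vscal_l, indicatrix_normal by exact Hs.
  expand_dot; rewrite (dot_comm (B s)), HTT, HBB, HTB; field; lra.
Qed.

Lemma indicatrix_torsion s : in_interval a b s ->
  tT (sT s) * (kappa s ^ 2 + tau s ^ 2) = kappa s * df s.
Proof.
  intros Hs.
  destruct (Halpha Hs) as (_ & _ & _ & _ & (HTT & _ & HBB & HTN & HTB & HNB & _) & Hk).
  destruct (HalphaT (image_interval_image sT Hs)) as (_ & _ & DNT & _).
  assert (Horth : locally s (fun x =>
            dot (NT (sT x)) (vadd (vscal (tau x / kappa x) (T x)) (B x)) = 0)).
  { eapply filter_imp; [|exact (in_interval_locally Hs)].
    exact indicatrix_normal_orthogonal_darboux. }
  assert (Hder := is_derive_dot _ _ _ _ _ (vderive_comp _ _ _ _ _ DNT (HsT Hs))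
                    (darboux_direction_derive Hs)).
  assert (Z := is_derive_locally_zero Horth Hder); cbv beta in Z.
  set (w := kappa s * kT (sT s)).
  set (Ds := vadd (vscal (tau s / kappa s) (T s)) (B s)) in Z.
  assert (HTTD : dot (TT (sT s)) Ds = 0).
  { rewrite indicatrix_tangent by exact Hs; unfold Ds.
    expand_dot; rewrite HNB, (dot_comm (N s)), HTN; ring. }
  assert (HBTD : w * dot (BT (sT s)) Ds = (tau s ^ 2 + kappa s ^ 2) / kappa s).
  { unfold w; rewrite <- dot_vscal_l, indicatrix_binormal by exact Hs; unfold Ds.
    expand_dot; rewrite (dot_comm (B s)), HTT, HBB, HTB; field; lra. }
  assert (HNTT : w * dot (NT (sT s)) (T s) = - kappa s).
  { unfold w; rewrite <- dot_vscal_l, indicatrix_normal by exact Hs.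
    expand_dot; rewrite (dot_comm (B s)), HTT, HTB; ring. }
  rewrite dot_vscal_l, dot_vadd_l, !dot_vscal_l, dot_vscal_r, HTTD in Z.
  assert (Zw : kappa s * tT (sT s) * (w * dot (BT (sT s)) Ds)
               + df s * (w * dot (NT (sT s)) (T s)) = w * 0) by (rewrite <- Z; ring).
  rewrite Rmult_0_r, HBTD, HNTT in Zw.
  replace (tT (sT s) * (kappa s ^ 2 + tau s ^ 2))
    with (kappa s * tT (sT s) * ((tau s ^ 2 + kappa s ^ 2) / kappa s)) by (field; lra).
  lra.
Qed.

End TangentIndicatrix.

Theorem corollary5p6
  (a b : Rbar)
  (* the curve alpha, parametrized by arc length s on I = (a,b) *)
  (alpha T N B : R -> vec3) (kappa tau : R -> R)
  (Halpha : frenet_apparatus (in_interval a b) alpha T N B kappa tau)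
  (* derivative (tau/kappa)' with respect to s *)
  (df : R -> R)
  (Hdf : forall s : R, in_interval a b s ->
           is_derive (fun x : R => tau x / kappa x) s (df s))
  (* arc length s_T of the tangent indicatrix: ds_T/ds = kappa *)
  (sT : R -> R)
  (HsT : forall s : R, in_interval a b s -> is_derive sT s (kappa s))
  (* the tangent indicatrix alpha_T = T, parametrized by s_T, with its
     Frenet apparatus *)
  (alphaT TT NT BT : R -> vec3) (kT tT : R -> R)
  (HalphaT_def : forall s : R, in_interval a b s -> alphaT (sT s) = T s)
  (HalphaT : frenet_apparatus (image_interval a b sT) alphaT TT NT BT kT tT)
  (* Bertrand-direction curve beta of alpha_T with constant angle theta:
     T_beta = X = cos theta T_T + sin theta B_T, N_beta = N_T *)
  (theta : R)
  (beta Bb : R -> vec3) (kb tb : R -> R)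
  (Hbeta : frenet_apparatus (image_interval a b sT)
             beta
             (fun u => vadd (vscal (cos theta) (TT u)) (vscal (sin theta) (BT u)))
             NT Bb kb tb) :
  forall s : R, in_interval a b s ->
    (- sin theta + (tb (sT s) / kb (sT s)) * cos theta) /
    (cos theta + (tb (sT s) / kb (sT s)) * sin theta)
    = kappa s ^ 2 / Rpower (kappa s ^ 2 + tau s ^ 2) (3 / 2) * df s.
Proof.
  intros s Hs.
  destruct (Halpha s Hs) as (_ & _ & _ & _ & _ & Hk).
  pose proof (image_interval_image sT Hs) as Hu.
  destruct (HalphaT _ Hu) as (_ & _ & _ & _ & _ & HkT).
  destruct (Hbeta _ Hu) as (_ & _ & _ & _ & _ & Hkb).
  destruct (bertrand_direction_curvatures HalphaT Hbeta Hu) as [Ekb Etb].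
  rewrite (rotated_ratio Ekb Etb) by lra.
  assert (Hw := kappa_kT_pos Halpha HalphaT Hs).
  assert (Hcurv := indicatrix_curvature Halpha HsT HalphaT_def HalphaT Hs).
  assert (Htors := indicatrix_torsion Halpha HsT HalphaT_def HalphaT df Hdf Hs).
  rewrite <- Hcurv in Htors |- *.
  rewrite Rpower_sqr_three_halves by exact Hw.
  replace (df s) with (tT (sT s) * (kappa s * kT (sT s)) ^ 2 / kappa s)
    by (rewrite Htors; field; lra).
  field; lra.
Qed.
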